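(* Let $\mathcal{L}\in\mathrm{Mat}_d(\mathbb{Q})$ have no non-trivial invariant subspace over $\mathbb{Q}$, let $K>0$, and let $A\subset \mathbb{Z}^d$ be a finite set with $|A|=n$ and $|A+\mathcal{L} A|\leq Kn$. If $U$ is a vector subspace of $\mathbb{Q}^d$ of dimension $k<d$, then every translate $u+U$ ($u\in\mathbb{Q}^d$) of $U$ contains at most $(Kn)^{1-2^{-k}}$ points of $A$.
   Context: A non-trivial invariant subspace of $\mathcal{L}$ over $\mathbb{Q}$ is a subspace $W\subseteq\mathbb{Q}^d$ with $W\ne\{0\},\mathbb{Q}^d$ and $\mathcal{L}W\subseteq W$. $\mathcal{L}A=\{\mathcal{L}a:a\in A\}$. *)

From HB Require Import structures.
From mathcomp Require Import all_boot all_order all_algebra finmap.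
From mathcomp Require Import all_classical all_reals all_analysis.
Set Implicit Arguments. Unset Strict Implicit. Unset Printing Implicit Defensive.
Import Order.TTheory GRing.Theory Num.Theory.
Local Open Scope ring_scope.

Definition nontriv_invariant (d : nat) (L : 'M[rat]_d) (W : {vspace 'cV[rat]_d}) : Prop :=
  W != 0%VS /\ W != fullv /\ (forall w, w \in W -> L *m w \in W).

Definition no_nontriv_invariant (d : nat) (L : 'M[rat]_d) : Prop :=
  forall W : {vspace 'cV[rat]_d}, ~ nontriv_invariant L W.

Definition is_int_vec (d : nat) (v : 'cV[rat]_d) : bool :=
  [forall i, v i ord0 \is a Num.int].

Definition sum_LA (d : nat) (L : 'M[rat]_d) (A : {fset 'cV[rat]_d}) : {fset 'cV[rat]_d} :=
  [fset (a + L *m b)%R | a in A, b in A]%fset.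

Definition pts_in_translate (d : nat) (A : {fset 'cV[rat]_d})
  (u : 'cV[rat]_d) (U : {vspace 'cV[rat]_d}) : {fset 'cV[rat]_d} :=
  [fset a in A | ((a - u)%R \in U)]%fset.

(* Induct on dim V.  For the points B of A in a translate w + V, count the
   |B|^2 pairs (b, b') according to s = b + L b' in B + L B, a set of size at
   most K n.  Two solutions b', b'' of s - L b' in B differ by a vector x of V
   with L x in V as well, so each fibre lies in a translate of V ∩ L^-1 V.
   As L has no non-trivial invariant subspace, V ∩ L^-1 V is strictly smaller
   than V whenever 0 ≠ V ≠ Q^d, so if dim V <= k + 1 induction gives
   |B|^2 <= K n (K n)^(1 - 2^-k) = ((K n)^(1 - 2^-(k+1)))^2. *)
From HB Require Import structures.
From mathcomp Require Import all_boot all_order all_algebra finmap.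
From mathcomp Require Import all_classical all_reals all_analysis.
From mathcomp Require Import ring.
Set Implicit Arguments. Unset Strict Implicit. Unset Printing Implicit Defensive.
Import Order.TTheory GRing.Theory Num.Theory.
Local Open Scope ring_scope.

Lemma sum_nat_of_bool (T : Type) (r : seq T) (P : pred T) :
  (\sum_(x <- r) P x = count P r)%N.
Proof. by rewrite -sum1_count [RHS]big_mkcond; apply: eq_bigr => x _; case: (P x). Qed.

Section SumsetDoubleCounting.
Variables (V : zmodType) (f : V -> V) (B : {fset V}).

Let S : {fset V} := [fset (b + f b')%R | b in B, b' in B]%fset.

Lemma card_sqr_sum_count_fibre :
  (#|` B| * #|` B| = \sum_(s <- S) count (fun b' => (s - f b')%R \in B) B)%N.
Proof.
have sum_pair_eq b b' : b \in B -> b' \in B ->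
    (\sum_(s <- S) (s == (b + f b')%R) = 1)%N.
  move=> bB b'B; rewrite sum_nat_of_bool count_uniq_mem ?fset_uniq //.
  by have -> : (b + f b')%R \in S by apply: in_imfset2.
transitivity (\sum_(b <- B) \sum_(b' <- B) \sum_(s <- S) (s == (b + f b')%R))%N.
  rewrite (eq_big_seq (fun=> #|` B|)) => [|b bB].
    by rewrite big_const_seq count_predT iter_addn_0 mulnC.
  by rewrite (eq_big_seq (fun=> 1%N)) ?sum1_size // => b' b'B; rewrite sum_pair_eq.
rewrite exchange_big /=; under eq_bigr do rewrite exchange_big /=.
rewrite exchange_big /=; apply: eq_bigr => s _.
rewrite -sum_nat_of_bool; apply: eq_bigr => b' _.
rewrite -(count_uniq_mem (s - f b') (fset_uniq B)) -sum_nat_of_bool.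
by apply: eq_bigr => b _; rewrite /= [b == _]eq_sym subr_eq.
Qed.

Lemma card_sqr_le_sumset (R : numDomainType) (M : R) :
  (forall s, (count (fun b' => s - f b' \in B) B)%:R <= M) ->
  (#|` B| * #|` B|)%:R <= #|` S|%:R * M.
Proof.
move=> fibre_le; rewrite card_sqr_sum_count_fibre natr_sum.
apply: le_trans (ler_sum _ (fun s _ => fibre_le s)) _.
by rewrite big_const_seq count_predT iter_addr_0 mulr_natl.
Qed.

End SumsetDoubleCounting.

Lemma pts_in_translate_sub (d : nat) (A : {fset 'cV[rat]_d}) w V :
  (pts_in_translate A w V `<=` A)%fset.
Proof. by apply/fsubsetP => x; rewrite !inE => /andP[]. Qed.

Lemma card_pts_in_translate0 (d : nat) (A : {fset 'cV[rat]_d}) w :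
  (#|` pts_in_translate A w 0%VS| <= 1)%N.
Proof.
apply: leq_trans (fsubset_leq_card (_ : _ `<=` [fset w])%fset) _.
  by apply/fsubsetP => x; rewrite !inE memv0 subr_eq0 => /andP[_ ->].
by rewrite cardfs1.
Qed.

Section StablePart.
Variables (d : nat) (L : 'M[rat]_d).

Definition stable_part (V : {vspace 'cV[rat]_d}) : {vspace 'cV[rat]_d} :=
  (V :&: linfun (mulmx L) @^-1: V)%VS.

Lemma memv_stable_part V v :
  (v \in stable_part V) = (v \in V) && (L *m v \in V).
Proof. by rewrite memv_cap -memv_preim lfunE. Qed.

Lemma dim_stable_part_lt V :
  no_nontriv_invariant L -> V != 0%VS -> (\dim V < d)%N ->
  (\dim (stable_part V) < \dim V)%N.
Proof.
move=> noinv V0 dimV; rewrite ltn_neqAle dimvS ?capvSl // andbT.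
apply/negP => /eqP dimE; apply: (noinv V); split=> //; split.
  by apply: contraTneq dimV => ->; rewrite dimvf /dim /= muln1 ltnn.
have stableV : stable_part V = V by apply/eqP; rewrite eqEdim capvSl dimE /=.
by move=> v; rewrite -{1}stableV memv_stable_part => /andP[].
Qed.

Lemma count_fibre_le_translate (A : {fset 'cV[rat]_d}) V w s :
  let B := pts_in_translate A w V in
  exists z, (count (fun b' => (s - L *m b')%R \in B) B
             <= #|` pts_in_translate A z (stable_part V)|)%N.
Proof.
move=> B; have [/hasP[b0 b0B fib0] | fib_empty] :=
  boolP (has (fun b' => s - L *m b' \in B) B); last first.
  by exists w; move: fib_empty; rewrite has_count -leqNgt leqn0 => /eqP->.
exists b0; rewrite -size_filter.
apply: uniq_leq_size; first exact/filter_uniq/fset_uniq.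
move=> b'; rewrite mem_filter => /andP[fib' b'B].
move: b'B fib' b0B fib0; rewrite !inE => /andP[b'A b'V] /andP[_ y'V].
move=> /andP[_ b0V] /andP[_ y0V].
rewrite b'A memv_stable_part /=; apply/andP; split.
  have -> : b' - b0 = (b' - w) - (b0 - w) by rewrite opprB addrA subrK.
  exact: memvB.
have -> : L *m (b' - b0) = (s - L *m b0 - w) - (s - L *m b' - w).
  by rewrite mulmxBr opprB addrA subrK opprB addrC addrA subrK.
exact: memvB.
Qed.

End StablePart.

Lemma powR_halfexp_sqr (R : realType) (N : R) (k : nat) : 0 < N ->
  (N `^ (1 - (2 ^+ k.+1)^-1)) ^+ 2 = N * N `^ (1 - (2 ^+ k)^-1).
Proof.
move=> N_gt0; have N0 : N != 0 by rewrite gt_eqF.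
rewrite expr2 -powRD ?N0 ?implybT // -[X in X * _](powRr1 (ltW N_gt0)).
rewrite -powRD ?N0 ?implybT //; congr powR.
have two_k_neq0 : (2 ^+ k : R) != 0 by rewrite expf_neq0 // pnatr_eq0.
by rewrite exprS invfM; field.
Qed.

Lemma one_le_powR_halfexp (R : realType) (N : R) (k : nat) : 1 <= N ->
  1 <= N `^ (1 - (2 ^+ k)^-1).
Proof.
move=> N_ge1; rewrite -[X in X <= _](powRr0 N) ler_powR // subr_ge0.
by rewrite invf_le1 ?exprn_gt0 // exprn_ege1 // ler1n.
Qed.

Lemma card_pts_in_translate_le (R : realType) (d : nat) (L : 'M[rat]_d)
    (A : {fset 'cV[rat]_d}) (N : R) :
  no_nontriv_invariant L -> 1 <= N -> #|` sum_LA L A|%:R <= N ->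
  forall k, (k < d)%N -> forall V w, (\dim V <= k)%N ->
  #|` pts_in_translate A w V|%:R <= N `^ (1 - (2 ^+ k)^-1).
Proof.
move=> noinv N_ge1 sumset_le; have N_gt0 : 0 < N by apply: lt_le_trans N_ge1.
have card0_le k w : #|` pts_in_translate A w 0%VS|%:R <= N `^ (1 - (2 ^+ k)^-1).
  apply: le_trans (one_le_powR_halfexp k N_ge1).
  by rewrite lern1 card_pts_in_translate0.
elim=> [|k IHk] k_lt_d V w dimV.
  by move: dimV; rewrite leqn0 dimv_eq0 => /eqP->.
have [-> | V0] := eqVneq V 0%VS; first exact: card0_le.
set B := pts_in_translate A w V.
set M := N `^ (1 - (2 ^+ k)^-1).
have fibre_le s : (count (fun b' => s - L *m b' \in B) B)%:R <= M.
  have [z cnt_le] := count_fibre_le_translate L A V w s.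
  have dimV' : (\dim (stable_part L V) <= k)%N.
    by rewrite -ltnS (leq_trans (dim_stable_part_lt noinv V0 _) dimV)
      ?(leq_ltn_trans dimV k_lt_d).
  by apply: le_trans (IHk (ltnW k_lt_d) _ z dimV'); rewrite ler_nat.
have sumsetB_le : #|` sum_LA L B|%:R <= N.
  apply: le_trans sumset_le; rewrite ler_nat fsubset_leq_card //.
  apply/fsubsetP => _ /imfset2P[a aB [b bB ->]].
  by apply: in_imfset2; apply: (fsubsetP (pts_in_translate_sub A w V)).
rewrite -(ler_pXn2r (n := 2)) ?nnegrE ?powR_ge0 // powR_halfexp_sqr //.
rewrite expr2 -natrM (le_trans (card_sqr_le_sumset fibre_le)) //.
by rewrite ler_wpM2r ?powR_ge0.
Qed.

Theorem lemma2p4 (R : realType) (d : nat) (L : 'M[rat]_d) (K : R)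
  (A : {fset 'cV[rat]_d}) (U : {vspace 'cV[rat]_d}) (u : 'cV[rat]_d) :
  no_nontriv_invariant L ->
  0 < K ->
  (forall a, a \in A -> is_int_vec a) ->
  ((#|` sum_LA L A|)%:R <= K * (#|` A|)%:R) ->
  (\dim U < d)%N ->
  ((#|` pts_in_translate A u U|)%:R : R)
    <= (K * (#|` A|)%:R) `^ (1 - (2 ^+ (\dim U))^-1).
Proof.
move=> noinv _ _ sumset_le dimU.
have [A0 | /fset0Pn[a aA]] := eqVneq A fset0.
  have := fsubset_leq_card (pts_in_translate_sub A u U).
  by rewrite A0 cardfs0 leqn0 => /eqP->; rewrite powR_ge0.
have N_ge1 : 1 <= K * #|` A|%:R.
  apply: le_trans sumset_le; rewrite ler1n cardfs_gt0.
  by apply/fset0Pn; exists (a + L *m a); apply: in_imfset2.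
exact: card_pts_in_translate_le noinv N_ge1 sumset_le _ dimU U u (leqnn _).
Qed.
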